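(* Let $\eta>0$. For all sufficiently large $\ell$, the fundamental eigenvalue $\omega_\ell^2$ satisfies $$\frac{k^2}{2}\le\frac{\omega_\ell^2}{\ell(\ell+1)}\le k^2+\eta.$$
   Context: Fix $M>0$, $k>0$; $\Delta(r)=r^2+k^2r^4-2Mr$, $w:=\Delta/r^4$, viewed as a function of $r^\star$ defined by $dr^\star/dr=r^2/\Delta$, $r^\star(r=+\infty)=\pi/2$; $r^\star_{3M}=r^\star(r=3M)$; prime is $d/dr^\star$. For $\ell\ge2$, $\omega_\ell^2$ is defined as $$\omega_\ell^2=\inf_{R\in H^1_0((r^\star_{3M},\pi/2])\setminus\{0\}}\frac{\int_{r^\star_{3M}}^{\pi/2}\big((R')^2+w(\ell(\ell+1)-\frac{6M}{r})R^2\big)dr^\star+\frac{6Mk^2}{\ell(\ell+1)-2}R(\frac\pi2)^2}{\int_{r^\star_{3M}}^{\pi/2}R^2\,dr^\star+\frac{12M}{\ell(\ell+1)(\ell(\ell+1)-2)}R(\frac\pi2)^2},$$ where $H^1_0((r^\star_{3M},\pi/2])$ is the $H^1$-closure of smooth functions compactly supported in $(r^\star_{3M},\pi/2]$; this infimum is attained and is the lowest eigenvalue of $\omega^2R=-R''+w(\ell(\ell+1)-\frac{6M}{r})R$, $R(r^\star_{3M})=0$, $(-2\omega^2R+\frac{\ell(\ell+1)(\ell(\ell+1)-2)}{6M}R'+k^2\ell(\ell+1)R)(\pi/2)=0$. *)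

From Stdlib Require Import Reals Lra ClassicalEpsilon.
From Coquelicot Require Import Coquelicot.
Open Scope R_scope.

Definition Delta (M k r : R) : R := r ^ 2 + k ^ 2 * r ^ 4 - 2 * M * r.

(* tortoise coordinate: dr*/dr = r^2/Delta, r*(+oo) = pi/2, i.e.
   r*(r) = pi/2 - \int_r^{+oo} s^2/Delta(s) ds   (used for r >= 3M, where Delta > 0) *)
Definition rstar (M k r : R) : R :=
  PI / 2 - RInt_gen (fun s => s ^ 2 / Delta M k s) (at_point r) (Rbar_locally p_infty).

Definition rstar3M (M k : R) : R := rstar M k (3 * M).

(* r as a function of r* on [r*_{3M}, pi/2): the (unique) r >= 3M with r*(r) = x *)
Definition r_of (M k x : R) : R :=
  epsilon (inhabits 0) (fun r => 3 * M <= r /\ rstar M k r = x).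

Definition w (M k x : R) : R := Delta M k (r_of M k x) / (r_of M k x) ^ 4.

Definition Lam (l : nat) : R := INR l * (INR l + 1).

Definition V (M k : R) (l : nat) (x : R) : R :=
  w M k x * (Lam l - 6 * M / r_of M k x).

(* smooth functions compactly supported in (r*_{3M}, pi/2]: restrictions of
   smooth functions on R that vanish on a neighbourhood (-oo, r*_{3M}+delta] *)
Definition admissible (M k : R) (f : R -> R) : Prop :=
  (forall (n : nat) (x : R), ex_derive_n f n x) /\
  (exists delta, 0 < delta /\ forall x, x <= rstar3M M k + delta -> f x = 0) /\
  (exists x, rstar3M M k < x <= PI / 2 /\ f x <> 0).

Definition numer (M k : R) (l : nat) (f : R -> R) : R :=
  RInt (fun x => (Derive f x) ^ 2 + V M k l x * (f x) ^ 2) (rstar3M M k) (PI / 2)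
  + 6 * M * k ^ 2 / (Lam l - 2) * (f (PI / 2)) ^ 2.

Definition denom (M k : R) (l : nat) (f : R -> R) : R :=
  RInt (fun x => (f x) ^ 2) (rstar3M M k) (PI / 2)
  + 12 * M / (Lam l * (Lam l - 2)) * (f (PI / 2)) ^ 2.

Definition omega2 (M k : R) (l : nat) : Rbar :=
  Glb_Rbar (fun q => exists f, admissible M k f /\ q = numer M k l f / denom M k l f).

(* Put y = 1/r, a function of r* on [r*_{3M}, pi/2] that decreases from 1/(3M) to 0.  It
   is continuous because it is monotone and takes every intermediate value, r* being a
   continuous increasing function of r.  In this variable the potential is
   V = (y^2 + k^2 - 2M y^3) (l(l+1) - 6M y), which lies between k^2 (l(l+1) - 2) and
   (k^2 + y^2) l(l+1).  The lower bound on V, together with the fact that the two boundary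
   terms are exactly in the ratio k^2 l(l+1) / 2, bounds every Rayleigh quotient from below.
   For the upper bound, take a smooth flat test function supported where r is so large that
   y^2 <= eta/2: its kinetic energy is a fixed multiple of its mass, hence negligible against
   (eta/2) l(l+1) times its mass once l is large. *)

From Stdlib Require Import Reals Lra Classical ClassicalEpsilon.
From Coquelicot Require Import Coquelicot.
Open Scope R_scope.

Lemma continuous_sqr (f : R -> R) (x : R) :
  continuous f x -> continuous (fun y => f y ^ 2) x.
Proof.
  intros Hf. apply (continuous_comp f (fun y => y ^ 2)); [exact Hf|].
  apply (ex_derive_continuous (fun y => y ^ 2)). auto_derive. exact I.
Qed.

Lemma RInt_sqr_pos (f : R -> R) (a b x0 : R) :
  (forall x, continuous f x) -> a < x0 < b -> f x0 <> 0 ->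
  0 < RInt (fun x => f x ^ 2) a b.
Proof.
  intros Hf Hx0 Hfx0.
  set (g := fun x => f x ^ 2).
  assert (Hg : forall x, continuous g x) by (intros x; apply continuous_sqr, Hf).
  assert (Hex : forall s t, ex_RInt g s t)
    by (intros s t; apply (@ex_RInt_continuous R_CompleteNormedModule); intros; apply Hg).
  destruct (continuous_neq_0 f x0) as [e He]; [apply continuity_pt_filterlim, Hf | exact Hfx0|].
  assert (He0 := cond_pos e).
  set (p := Rmax a (x0 - e / 2)). set (q := Rmin b (x0 + e / 2)).
  assert (Hp : a <= p /\ x0 - e / 2 <= p /\ p < x0)
    by (repeat split; [apply Rmax_l | apply Rmax_r | apply Rmax_lub_lt; lra]).
  assert (Hq : q <= b /\ q <= x0 + e / 2 /\ x0 < q)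
    by (repeat split; [apply Rmin_l | apply Rmin_r | apply Rmin_glb_lt; lra]).
  assert (Hap : 0 <= RInt g a p) by (apply RInt_ge_0; [lra | apply Hex | intros; apply pow2_ge_0]).
  assert (Hqb : 0 <= RInt g q b) by (apply RInt_ge_0; [lra | apply Hex | intros; apply pow2_ge_0]).
  assert (Hpq : 0 < RInt g p q).
  { apply RInt_gt_0; [lra | | intros; apply Hg].
    intros x Hx. apply pow2_gt_0. replace x with (x0 + (x - x0)) by ring.
    apply He. apply Rabs_def1; lra. }
  rewrite <- (RInt_Chasles g a p b), <- (RInt_Chasles g p q b) by apply Hex.
  unfold plus; simpl. lra.
Qed.

Lemma nonincreasing_darboux_right (g : R -> R) :
  (forall x y, x <= y -> g y <= g x) ->
  (forall x1 x2 y, g x2 <= y <= g x1 -> exists x, g x = y) ->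
  forall x0 eps, 0 < eps ->
  exists d, 0 < d /\ forall x, x0 <= x < x0 + d -> g x0 - eps < g x.
Proof.
  intros Hmono Hdarboux x0 eps Heps.
  destruct (classic (exists x1, x0 < x1 /\ g x1 <= g x0 - eps)) as [[x1 [Hx1 Hg1]] | Hnone].
  - destruct (Hdarboux x0 x1 (g x0 - eps / 2)) as [x2 Hx2]; [lra|].
    assert (Hx02 : x0 < x2).
    { apply Rnot_le_lt. intros Hle. specialize (Hmono _ _ Hle). lra. }
    exists (x2 - x0). split; [lra|].
    intros x Hx. assert (Hmx := Hmono x x2 ltac:(lra)). lra.
  - exists 1. split; [lra|]. intros x [Hx _].
    destruct (Rle_lt_or_eq_dec x0 x Hx) as [Hlt | <-]; [|lra].
    apply Rnot_le_lt. intros Hle. apply Hnone. exists x. split; assumption.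
Qed.

Lemma nonincreasing_darboux_continuous (g : R -> R) :
  (forall x y, x <= y -> g y <= g x) ->
  (forall x1 x2 y, g x2 <= y <= g x1 -> exists x, g x = y) ->
  forall x, continuous g x.
Proof.
  intros Hmono Hdarboux x0.
  (* The left-hand estimate is the right-hand one for the reflection [x |-> - g (- x)]. *)
  set (g' := fun x => - g (- x)).
  assert (Hmono' : forall x y, x <= y -> g' y <= g' x).
  { intros x y Hxy. unfold g'. assert (Hm := Hmono (- y) (- x) ltac:(lra)). lra. }
  assert (Hdarboux' : forall x1 x2 y, g' x2 <= y <= g' x1 -> exists x, g' x = y).
  { intros x1 x2 y Hy. unfold g' in Hy.
    destruct (Hdarboux (- x2) (- x1) (- y)) as [x Hx]; [lra|].
    exists (- x). unfold g'. rewrite Ropp_involutive, Hx. ring. }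
  apply filterlim_locally. intros eps.
  destruct (nonincreasing_darboux_right g Hmono Hdarboux x0 eps (cond_pos eps)) as [d1 [Hd1 Hright]].
  destruct (nonincreasing_darboux_right g' Hmono' Hdarboux' (- x0) eps (cond_pos eps))
    as [d2 [Hd2 Hleft]].
  exists (mkposreal _ (Rmin_pos d1 d2 Hd1 Hd2)). intros x Hx.
  change (Rabs (x - x0) < Rmin d1 d2) in Hx. apply Rabs_def2 in Hx as [Hx1 Hx2].
  assert (Hm1 := Rmin_l d1 d2). assert (Hm2 := Rmin_r d1 d2).
  change (Rabs (g x - g x0) < eps). apply Rabs_def1.
  - destruct (Rle_or_lt x0 x) as [Hle | Hlt].
    + assert (Hm := Hmono x0 x Hle). assert (Heps := cond_pos eps). lra.
    + assert (Hl := Hleft (- x) ltac:(lra)). unfold g' in Hl.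
      rewrite !Ropp_involutive in Hl. lra.
  - destruct (Rle_or_lt x0 x) as [Hle | Hlt].
    + assert (Hr := Hright x ltac:(lra)). lra.
    + assert (Hm := Hmono x x0 ltac:(lra)). assert (Heps := cond_pos eps). lra.
Qed.

(** * Flat functions *)

Inductive is_poly : (R -> R) -> Prop :=
  | is_poly_const (c : R) : is_poly (fun _ => c)
  | is_poly_id : is_poly (fun y => y)
  | is_poly_plus (P Q : R -> R) : is_poly P -> is_poly Q -> is_poly (fun y => P y + Q y)
  | is_poly_mult (P Q : R -> R) : is_poly P -> is_poly Q -> is_poly (fun y => P y * Q y).

Lemma is_poly_derive (P : R -> R) :
  is_poly P -> exists P', is_poly P' /\ forall y, is_derive P y (P' y).
Proof.
  induction 1 as [c | | P Q _ [P' [HP' HdP]] _ [Q' [HQ' HdQ]]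
                 | P Q HP [P' [HP' HdP]] HQ [Q' [HQ' HdQ]]].
  - exists (fun _ => 0). split; [constructor|]. intros y. apply (is_derive_const c).
  - exists (fun _ => 1). split; [constructor|]. intros y. apply (@is_derive_id R_AbsRing).
  - exists (fun y => P' y + Q' y). split; [constructor; assumption|].
    intros y. apply (is_derive_plus P Q y _ _ (HdP y) (HdQ y)).
  - exists (fun y => P' y * Q y + P y * Q' y). split; [repeat constructor; assumption|].
    intros y. apply (is_derive_mult P Q y _ _ (HdP y) (HdQ y)). intros; apply Rmult_comm.
Qed.

Lemma is_poly_subexp (P : R -> R) :
  is_poly P -> forall eps, 0 < eps ->
  exists C, forall y, 0 <= y -> Rabs (P y) <= C * exp (eps * y).
Proof.
  induction 1 as [c | | P Q _ IHP _ IHQ | P Q _ IHP _ IHQ]; intros eps Heps.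
  - exists (Rabs c). intros y Hy.
    assert (Hexp := exp_ineq1_le (eps * y)). assert (Hc := Rabs_pos c).
    assert (Hey : 0 <= eps * y) by (apply Rmult_le_pos; lra). nra.
  - exists (/ eps). intros y Hy. rewrite Rabs_right by lra.
    assert (Hexp := exp_ineq1_le (eps * y)).
    replace y with (/ eps * (eps * y)) at 1 by (field; lra).
    apply Rmult_le_compat_l; [apply Rlt_le, Rinv_0_lt_compat |]; lra.
  - destruct (IHP eps Heps) as [C1 H1]. destruct (IHQ eps Heps) as [C2 H2].
    exists (C1 + C2). intros y Hy.
    assert (Htri := Rabs_triang (P y) (Q y)). specialize (H1 y Hy). specialize (H2 y Hy). lra.
  - destruct (IHP (eps / 2)) as [C1 H1]; [lra|]. destruct (IHQ (eps / 2)) as [C2 H2]; [lra|].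
    exists (C1 * C2). intros y Hy.
    assert (Hexp : exp (eps * y) = exp (eps / 2 * y) * exp (eps / 2 * y))
      by (rewrite <- exp_plus; f_equal; field).
    rewrite Hexp, Rabs_mult.
    replace (C1 * C2 * (exp (eps / 2 * y) * exp (eps / 2 * y)))
      with (C1 * exp (eps / 2 * y) * (C2 * exp (eps / 2 * y))) by ring.
    apply Rmult_le_compat; auto using Rabs_pos.
Qed.

Definition flat (c : R) (P : R -> R) (t : R) : R :=
  if Rlt_dec c t then P (/ (t - c)) * exp (- / (t - c)) else 0.

Lemma flat_eq_0 (c : R) (P : R -> R) (t : R) : t <= c -> flat c P t = 0.
Proof. intros Ht. unfold flat. destruct (Rlt_dec c t); [lra | reflexivity]. Qed.

Lemma flat_one_pos (c t : R) : c < t -> 0 < flat c (fun _ => 1) t.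
Proof.
  intros Ht. unfold flat. destruct (Rlt_dec c t); [|lra]. rewrite Rmult_1_l. apply exp_pos.
Qed.

Lemma flat_derive_at_pole (c : R) (P : R -> R) : is_poly P -> is_derive (flat c P) c 0.
Proof.
  intros HP. apply is_derive_Reals. intros eps Heps.
  destruct (is_poly_subexp (fun y => y * P y) (is_poly_mult _ _ is_poly_id HP) (1 / 2))
    as [C HC]; [lra|].
  assert (HC0 : 0 <= C).
  { specialize (HC 0 (Rle_refl 0)). rewrite Rmult_0_r, exp_0 in HC.
    assert (H0 := Rabs_pos (0 * P 0)). lra. }
  assert (Hd : 0 < eps / (2 * C + 1)) by (apply Rdiv_lt_0_compat; lra).
  exists (mkposreal _ Hd). simpl. intros h Hh0 Hh.
  unfold flat. destruct (Rlt_dec c c) as [Hcc | _]; [lra|].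
  destruct (Rlt_dec c (c + h)) as [Hch | Hch].
  - (* With [y = 1/h] the difference quotient is [y P(y) e^{-y}], and [|y P(y)| <= C e^{y/2}]
       while [e^{-y/2} <= 1/(1 + y/2) < 2 h]. *)
    assert (Hh' : 0 < h) by lra. rewrite Rabs_right in Hh by lra.
    replace (c + h - c) with h by ring.
    set (y := / h).
    assert (Hyh : y * h = 1) by (unfold y; field; lra).
    replace ((P y * exp (- y) - 0) / h - 0) with (y * P y * exp (- y)) by (unfold y; field; lra).
    clearbody y. assert (Hy : 0 < y) by nra.
    rewrite Rabs_mult, (Rabs_right (exp (- y))) by (apply Rle_ge, Rlt_le, exp_pos).
    specialize (HC y (Rlt_le _ _ Hy)).
    apply Rle_lt_trans with (C * exp (1 / 2 * y) * exp (- y)).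
    { apply Rmult_le_compat_r; [apply Rlt_le, exp_pos | exact HC]. }
    assert (Hcancel : exp (1 / 2 * y) * exp (- y) = exp (- (y / 2)))
      by (rewrite <- exp_plus; f_equal; lra).
    rewrite Rmult_assoc, Hcancel.
    assert (Hdecay : exp (- (y / 2)) * (1 + y / 2) <= 1).
    { apply Rle_trans with (exp (- (y / 2)) * exp (y / 2)).
      - apply Rmult_le_compat_l; [apply Rlt_le, exp_pos | apply exp_ineq1_le].
      - rewrite <- exp_plus, Rplus_opp_l, exp_0. lra. }
    assert (Hdecay' : exp (- (y / 2)) <= 2 * h).
    { assert (Hpos := exp_pos (- (y / 2))). nra. }
    apply (Rmult_lt_compat_l (2 * C + 1)) in Hh; [|lra].
    replace ((2 * C + 1) * (eps / (2 * C + 1))) with eps in Hh by (field; lra).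
    nra.
  - replace ((0 - 0) / h - 0) with 0 by (field; lra). rewrite Rabs_R0. exact Heps.
Qed.

Lemma flat_derive (c : R) (P : R -> R) :
  is_poly P -> exists Q, is_poly Q /\ forall t, is_derive (flat c P) t (flat c Q t).
Proof.
  intros HP. destruct (is_poly_derive P HP) as [P' [HP' HdP]].
  (* [Q s = s^2 (P s - P' s)], written with [-1 *] to stay inside [is_poly]. *)
  exists (fun s => s * s * (P s + -1 * P' s)). split; [repeat constructor; assumption|].
  intros t. destruct (Rtotal_order c t) as [Hct | [<- | Htc]].
  - unfold flat at 2. destruct (Rlt_dec c t) as [_ | Hn]; [|lra].
    apply is_derive_ext_loc with (f := fun t => P (/ (t - c)) * exp (- / (t - c))).
    { apply (filter_imp (fun u => c < u)); [|exact (open_gt c t Hct)].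
      intros u Hu. unfold flat. destruct (Rlt_dec c u); [reflexivity | lra]. }
    auto_derive.
    + repeat split; try lra. exists (P' (/ (t - c))). apply HdP.
    + rewrite (is_derive_unique _ _ _ (HdP _)). unfold Rminus. field. lra.
  - unfold flat at 2. destruct (Rlt_dec c c); [lra|]. apply flat_derive_at_pole, HP.
  - unfold flat at 2. destruct (Rlt_dec c t); [lra|].
    apply is_derive_ext_loc with (f := fun _ => 0).
    { apply (filter_imp (fun u => u < c)); [|exact (open_lt c t Htc)].
      intros u Hu. unfold flat. destruct (Rlt_dec c u); [lra | reflexivity]. }
    apply (is_derive_const 0).
Qed.

Lemma flat_Derive_n (c : R) (P : R -> R) :
  is_poly P -> forall n, exists Q, is_poly Q /\ forall t, Derive_n (flat c P) n t = flat c Q t.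
Proof.
  intros HP n. induction n as [| n [Q [HQ HDQ]]].
  - exists P. split; [exact HP | reflexivity].
  - destruct (flat_derive c Q HQ) as [Q' [HQ' HdQ']].
    exists Q'. split; [exact HQ'|]. intros t. simpl.
    rewrite (Derive_ext _ _ _ HDQ). apply is_derive_unique, HdQ'.
Qed.

Lemma flat_smooth (c : R) (P : R -> R) : is_poly P -> forall n t, ex_derive_n (flat c P) n t.
Proof.
  intros HP [| n] t; [exact I|]. simpl.
  destruct (flat_Derive_n c P HP n) as [Q [HQ HDQ]].
  destruct (flat_derive c Q HQ) as [Q' [_ HdQ']].
  apply ex_derive_ext with (f := flat c Q); [intros; symmetry; apply HDQ |].
  eexists. apply HdQ'.
Qed.

Lemma at_point_pinfty_interval (r : R) (P : R -> Prop) :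
  (forall x, r <= x -> P x) ->
  filter_prod (at_point r) (Rbar_locally p_infty)
    (fun ab => forall x, Rmin (fst ab) (snd ab) <= x <= Rmax (fst ab) (snd ab) -> P x).
Proof.
  intros HP. apply (Filter_prod _ _ _ (fun a => a = r) (fun b => r < b)).
  - reflexivity.
  - exists r. auto.
  - intros a b -> Hb x Hx. simpl in Hx. rewrite Rmin_left, Rmax_right in Hx by lra.
    apply HP. lra.
Qed.

(** * The tortoise coordinate *)

Section SchwarzschildAdS.

Variables M k : R.
Hypothesis HM : 0 < M.
Hypothesis Hk : 0 < k.

Definition phi (s : R) : R := s ^ 2 / Delta M k s.

Definition Phi (r : R) : R := RInt phi (3 * M) r.

Lemma Delta_ge (s : R) : 2 * M <= s -> k ^ 2 * s ^ 4 <= Delta M k s.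
Proof.
  intros Hs. unfold Delta.
  assert (0 <= s * (s - 2 * M)) by (apply Rmult_le_pos; lra). nra.
Qed.

Lemma Delta_pos (s : R) : 2 * M <= s -> 0 < Delta M k s.
Proof.
  intros Hs. apply Rlt_le_trans with (k ^ 2 * s ^ 4); [|apply Delta_ge, Hs].
  apply Rmult_lt_0_compat; apply pow_lt; lra.
Qed.

Lemma phi_pos (s : R) : 2 * M <= s -> 0 < phi s.
Proof.
  intros Hs. apply Rdiv_lt_0_compat; [apply pow_lt; lra | apply Delta_pos, Hs].
Qed.

Lemma phi_le (s : R) : 2 * M <= s -> phi s <= / (k ^ 2 * s ^ 2).
Proof.
  intros Hs. assert (Hk2s : 0 < k ^ 2 * s ^ 4) by (apply Rmult_lt_0_compat; apply pow_lt; lra).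
  apply Rle_trans with (s ^ 2 / (k ^ 2 * s ^ 4)).
  - apply Rmult_le_compat_l; [apply pow2_ge_0|].
    apply Rinv_le_contravar; [exact Hk2s | apply Delta_ge, Hs].
  - right. field. split; lra.
Qed.

Lemma phi_continuous (s : R) : 2 * M < s -> continuous phi s.
Proof.
  intros Hs. apply (ex_derive_continuous phi).
  assert (HD := Delta_pos s (Rlt_le _ _ Hs)). unfold phi, Delta in *. auto_derive. lra.
Qed.

Lemma ex_RInt_phi (x y : R) : 2 * M < x -> 2 * M < y -> ex_RInt phi x y.
Proof.
  intros Hx Hy. apply (@ex_RInt_continuous R_CompleteNormedModule).
  intros z [Hz _]. apply phi_continuous.
  apply Rlt_le_trans with (Rmin x y); [apply Rmin_glb_lt|]; assumption.
Qed.

Lemma Phi_derive (r : R) : 2 * M < r -> is_derive Phi r (phi r).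
Proof.
  intros Hr. apply is_derive_RInt with (a := 3 * M); [|apply phi_continuous, Hr].
  apply (filter_imp (fun y => 2 * M < y)); [|exact (open_gt _ r Hr)].
  intros y Hy. apply (@RInt_correct R_CompleteNormedModule), ex_RInt_phi; lra.
Qed.

Lemma Phi_continuous (r : R) : 2 * M < r -> continuous Phi r.
Proof.
  intros Hr. apply (ex_derive_continuous Phi). eexists. apply Phi_derive, Hr.
Qed.

Lemma Phi_lt (r1 r2 : R) : 2 * M < r1 -> r1 < r2 -> Phi r1 < Phi r2.
Proof.
  intros H1 H12. unfold Phi.
  rewrite <- (RInt_Chasles phi (3 * M) r1 r2) by (apply ex_RInt_phi; lra).
  unfold plus; simpl.
  assert (0 < RInt phi r1 r2); [|lra].
  apply RInt_gt_0; [exact H12 | intros x Hx; apply phi_pos; lra |].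
  intros x Hx. apply phi_continuous. lra.
Qed.

Lemma Phi_le (r1 r2 : R) : 2 * M < r1 -> r1 <= r2 -> Phi r1 <= Phi r2.
Proof.
  intros H1 H12. destruct (Rle_lt_or_eq_dec r1 r2 H12) as [Hlt | <-]; [|lra].
  apply Rlt_le, Phi_lt; assumption.
Qed.

(* Compare [phi] with [1/(k^2 s^2)], whose primitive is [-1/(k^2 s)]. *)
Lemma Phi_bounded (r : R) : 3 * M <= r -> Phi r <= / (k ^ 2 * (3 * M)).
Proof.
  intros Hr. unfold Phi.
  assert (Hk2 : 0 < k ^ 2) by (apply pow_lt; lra).
  set (g := fun s => / (k ^ 2 * s ^ 2)).
  assert (Hg : is_RInt g (3 * M) r (- / (k ^ 2 * r) - - / (k ^ 2 * (3 * M)))).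
  { apply (is_RInt_derive (fun s => - / (k ^ 2 * s)) g);
      intros x Hx; rewrite Rmin_left, Rmax_right in Hx by lra.
    - unfold g. auto_derive; [nra|]. field. split; lra.
    - apply (ex_derive_continuous g). unfold g. auto_derive.
      apply Rgt_not_eq. repeat apply Rmult_lt_0_compat; lra. }
  apply Rle_trans with (RInt g (3 * M) r).
  - apply RInt_le; [exact Hr | apply ex_RInt_phi; lra | eexists; exact Hg |].
    intros x Hx. apply phi_le. lra.
  - rewrite (is_RInt_unique _ _ _ _ Hg).
    assert (0 < / (k ^ 2 * r)) by (apply Rinv_0_lt_compat; nra). lra.
Qed.

Lemma Phi_sup : exists I,
  (forall r, 3 * M <= r -> Phi r < I) /\
  (forall eps, 0 < eps -> exists r, 3 * M <= r /\ I - eps < Phi r).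
Proof.
  set (E := fun y => exists r, 3 * M <= r /\ y = Phi r).
  destruct (completeness E) as [I [Hub Hleast]].
  - exists (/ (k ^ 2 * (3 * M))). intros y [r [Hr ->]]. apply Phi_bounded, Hr.
  - exists (Phi (3 * M)), (3 * M). split; [lra | reflexivity].
  - exists I. split.
    + intros r Hr. apply Rlt_le_trans with (Phi (r + 1)); [apply Phi_lt; lra|].
      apply Hub. exists (r + 1). split; [lra | reflexivity].
    + intros eps Heps. apply NNPP. intros Hnone.
      assert (Hub' : is_upper_bound E (I - eps)).
      { intros y [r [Hr ->]]. apply Rnot_lt_le. intros Hlt. apply Hnone. exists r. auto. }
      specialize (Hleast _ Hub'). lra.
Qed.

(* The improper integral in [rstar r] is [I - Phi r], as [Phi] is a primitive of [phi]
   tending to [I]. *)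
Lemma rstar_of_sup (I : R) :
  (forall r, 3 * M <= r -> Phi r < I) ->
  (forall eps, 0 < eps -> exists r, 3 * M <= r /\ I - eps < Phi r) ->
  forall r, 3 * M <= r -> rstar M k r = PI / 2 - I + Phi r.
Proof.
  intros Hub Happrox r Hr.
  assert (Hphi : forall x, 2 * M < x -> Derive Phi x = phi x)
    by (intros x Hx; apply is_derive_unique, Phi_derive, Hx).
  assert (HJ : RInt_gen phi (at_point r) (Rbar_locally p_infty) = I - Phi r).
  { apply (@is_RInt_gen_unique R_CompleteNormedModule _ _ _ _).
    apply (is_RInt_gen_ext (Derive Phi)).
    { eapply filter_imp;
        [| apply (at_point_pinfty_interval r (fun x => Derive Phi x = phi x))].
      - intros ab Hab x [Hx1 Hx2]. apply Hab. split; apply Rlt_le; assumption.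
      - intros x Hx. apply Hphi. lra. }
    apply is_RInt_gen_Derive.
    - apply at_point_pinfty_interval. intros x Hx. eexists. apply Phi_derive. lra.
    - apply at_point_pinfty_interval. intros x Hx.
      apply continuous_ext_loc with (g := phi); [|apply phi_continuous; lra].
      apply (filter_imp (fun y => 2 * M < y)); [|apply open_gt; lra].
      intros y Hy. symmetry. apply Hphi, Hy.
    - intros P HP. exact (locally_singleton _ _ HP).
    - apply filterlim_locally. intros eps.
      destruct (Happrox eps (cond_pos eps)) as [R0 [HR0 HIR0]].
      exists R0. intros x Hx.
      assert (Phi R0 <= Phi x) by (apply Phi_le; lra).
      assert (Phi x < I) by (apply Hub; lra).
      change (Rabs (Phi x - I) < eps). apply Rabs_def1; lra. }
  unfold rstar. fold phi. rewrite HJ. ring.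
Qed.

Lemma Phi_3M : Phi (3 * M) = 0.
Proof. exact (RInt_point (3 * M) phi). Qed.

Lemma Phi_nonneg (r : R) : 3 * M <= r -> 0 <= Phi r.
Proof. intros Hr. rewrite <- Phi_3M. apply Phi_le; lra. Qed.

Lemma rstar_Phi (r : R) : 3 * M <= r -> rstar M k r = rstar3M M k + Phi r.
Proof.
  intros Hr. destruct Phi_sup as [I [Hub Happrox]]. unfold rstar3M.
  rewrite !(rstar_of_sup I Hub Happrox), Phi_3M by lra. ring.
Qed.

Lemma rstar3M_le (r : R) : 3 * M <= r -> rstar3M M k <= rstar M k r.
Proof. intros Hr. rewrite rstar_Phi by exact Hr. assert (H := Phi_nonneg r Hr). lra. Qed.

Lemma rstar_lt (r1 r2 : R) : 3 * M <= r1 -> r1 < r2 -> rstar M k r1 < rstar M k r2.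
Proof.
  intros H1 H12. rewrite !rstar_Phi by lra. assert (H := Phi_lt r1 r2 ltac:(lra) H12). lra.
Qed.

Lemma rstar_lt_PI2 (r : R) : 3 * M <= r -> rstar M k r < PI / 2.
Proof.
  intros Hr. destruct Phi_sup as [I [Hub Happrox]].
  rewrite (rstar_of_sup I Hub Happrox) by exact Hr. specialize (Hub r Hr). lra.
Qed.

Lemma rstar_near_PI2 (x : R) : x < PI / 2 -> exists r, 3 * M <= r /\ x < rstar M k r.
Proof.
  intros Hx. destruct Phi_sup as [I [Hub Happrox]].
  destruct (Happrox (PI / 2 - x)) as [r [Hr HIr]]; [lra|].
  exists r. split; [exact Hr|]. rewrite (rstar_of_sup I Hub Happrox) by exact Hr. lra.
Qed.

Lemma rstar_onto (x : R) :
  rstar3M M k <= x < PI / 2 -> exists r, 3 * M <= r /\ rstar M k r = x.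
Proof.
  intros Hx. destruct (rstar_near_PI2 x (proj2 Hx)) as [R0 [HR0 HxR0]].
  destruct (Ranalysis5.f_interv_is_interv (fun r => rstar3M M k + Phi r) (3 * M) (R0 + 1) x)
    as [r [Hr Hrx]].
  - lra.
  - rewrite Phi_3M. rewrite rstar_Phi in HxR0 by exact HR0.
    assert (Phi R0 <= Phi (R0 + 1)) by (apply Phi_le; lra). lra.
  - intros r Hr. apply continuity_pt_filterlim.
    apply (continuous_plus (fun _ => rstar3M M k) Phi);
      [apply continuous_const | apply Phi_continuous; lra].
  - exists r. split; [lra|]. rewrite rstar_Phi by lra. exact Hrx.
Qed.

Lemma r_of_spec (x : R) :
  rstar3M M k <= x < PI / 2 -> 3 * M <= r_of M k x /\ rstar M k (r_of M k x) = x.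
Proof.
  intros Hx. exact (epsilon_spec (inhabits 0) (fun r => 3 * M <= r /\ rstar M k r = x)
                      (rstar_onto x Hx)).
Qed.

Lemma r_of_gt (r x : R) : 3 * M <= r -> rstar M k r < x < PI / 2 -> r < r_of M k x.
Proof.
  intros Hr Hx. assert (Ha := rstar3M_le r Hr).
  destruct (r_of_spec x ltac:(lra)) as [H3M Hrx].
  apply Rnot_le_lt. intros Hle. destruct (Rle_lt_or_eq_dec _ _ Hle) as [Hlt | Heq].
  - assert (H := rstar_lt _ _ H3M Hlt). lra.
  - rewrite Heq in Hrx. lra.
Qed.

Lemma r_of_rstar (r : R) : 3 * M <= r -> r_of M k (rstar M k r) = r.
Proof.
  intros Hr.
  destruct (r_of_spec (rstar M k r)) as [H3M Hrr];
    [split; [apply rstar3M_le | apply rstar_lt_PI2]; exact Hr|].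
  destruct (Rtotal_order (r_of M k (rstar M k r)) r) as [Hlt | [Heq | Hgt]]; [|exact Heq|].
  - assert (H := rstar_lt _ _ H3M Hlt). lra.
  - assert (H := rstar_lt _ _ Hr Hgt). lra.
Qed.

Lemma r_of_le (x y : R) :
  rstar3M M k <= x <= y -> y < PI / 2 -> r_of M k x <= r_of M k y.
Proof.
  intros Hxy Hy. destruct (Rle_lt_or_eq_dec _ _ (proj2 Hxy)) as [Hlt | <-]; [|lra].
  destruct (r_of_spec x ltac:(lra)) as [H3M Hrx].
  apply Rlt_le, r_of_gt; [exact H3M | lra].
Qed.

Lemma rstar3M_lt_PI2 : rstar3M M k < PI / 2.
Proof. exact (rstar_lt_PI2 (3 * M) (Rle_refl _)). Qed.

(** * The potential as a function of [1/r] *)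

(* [1/r] as a function of [r*], continued by [1/(3M)] to the left of [r*_{3M}] and by [0]
   from [pi/2] on, so that it is continuous on the whole line. *)
Definition inv_r (x : R) : R :=
  if Rlt_dec x (PI / 2) then / r_of M k (Rmax (rstar3M M k) x) else 0.

Lemma inv_r_mid (x : R) : rstar3M M k <= x < PI / 2 -> inv_r x = / r_of M k x.
Proof.
  intros Hx. unfold inv_r. destruct (Rlt_dec x (PI / 2)) as [_ | Hn]; [|lra].
  rewrite Rmax_right by lra. reflexivity.
Qed.

Lemma inv_r_bounds (x : R) : 0 <= inv_r x <= / (3 * M).
Proof.
  assert (H3M : 0 < / (3 * M)) by (apply Rinv_0_lt_compat; lra).
  unfold inv_r. destruct (Rlt_dec x (PI / 2)) as [Hx | _]; [|lra].
  assert (Ha := rstar3M_lt_PI2).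
  destruct (r_of_spec (Rmax (rstar3M M k) x)) as [Hr _].
  { split; [apply Rmax_l | apply Rmax_lub_lt; assumption]. }
  split; [apply Rlt_le, Rinv_0_lt_compat; lra | apply Rinv_le_contravar; lra].
Qed.

Lemma inv_r_nonincreasing (x y : R) : x <= y -> inv_r y <= inv_r x.
Proof.
  intros Hxy. destruct (Rlt_dec y (PI / 2)) as [Hy | Hy].
  - unfold inv_r. destruct (Rlt_dec y (PI / 2)) as [_ | Hn]; [|lra].
    destruct (Rlt_dec x (PI / 2)) as [_ | Hn]; [|lra].
    assert (Ha := rstar3M_lt_PI2).
    assert (Hxa : rstar3M M k <= Rmax (rstar3M M k) x < PI / 2)
      by (split; [apply Rmax_l | apply Rmax_lub_lt; lra]).
    destruct (r_of_spec _ Hxa) as [Hr _].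
    apply Rinv_le_contravar; [lra|]. apply r_of_le.
    + split; [apply Rmax_l|]. apply Rmax_lub; [apply Rmax_l|].
      apply Rle_trans with y; [exact Hxy | apply Rmax_r].
    + apply Rmax_lub_lt; assumption.
  - unfold inv_r at 1. destruct (Rlt_dec y (PI / 2)) as [Hn | _]; [lra|]. apply inv_r_bounds.
Qed.

Lemma inv_r_onto (y : R) : 0 <= y <= / (3 * M) -> exists x, inv_r x = y.
Proof.
  intros Hy. destruct (Req_dec y 0) as [-> | Hy0].
  - exists (PI / 2). unfold inv_r. destruct (Rlt_dec (PI / 2) (PI / 2)); [lra | reflexivity].
  - assert (Hr : 3 * M <= / y).
    { rewrite <- (Rinv_inv (3 * M)). apply Rinv_le_contravar; lra. }
    exists (rstar M k (/ y)).
    rewrite inv_r_mid by (split; [apply rstar3M_le | apply rstar_lt_PI2]; exact Hr).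
    rewrite r_of_rstar by exact Hr. apply Rinv_inv.
Qed.

Lemma inv_r_continuous (x : R) : continuous inv_r x.
Proof.
  apply nonincreasing_darboux_continuous; [exact inv_r_nonincreasing|].
  intros x1 x2 y Hy. apply inv_r_onto.
  assert (H1 := inv_r_bounds x1). assert (H2 := inv_r_bounds x2). lra.
Qed.

Definition V_inv_r (L y : R) : R := (y ^ 2 + k ^ 2 - 2 * M * y ^ 3) * (L - 6 * M * y).

Lemma V_eq (l : nat) (x : R) :
  rstar3M M k < x < PI / 2 -> V M k l x = V_inv_r (Lam l) (inv_r x).
Proof.
  intros Hx. destruct (r_of_spec x ltac:(lra)) as [Hr _].
  rewrite inv_r_mid by lra. unfold V, w, Delta, V_inv_r. field. lra.
Qed.

Lemma V_inv_r_bounds (L y : R) :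
  2 <= L -> 0 <= y <= / (3 * M) -> k ^ 2 * (L - 2) <= V_inv_r L y <= (k ^ 2 + y ^ 2) * L.
Proof.
  intros HL Hy. unfold V_inv_r.
  assert (H3My : 3 * M * y <= 1).
  { replace 1 with (3 * M * / (3 * M)) by (field; lra).
    apply Rmult_le_compat_l; lra. }
  assert (Hw : k ^ 2 <= y ^ 2 + k ^ 2 - 2 * M * y ^ 3 <= k ^ 2 + y ^ 2).
  { assert (0 <= y ^ 2 * (1 - 2 * M * y)) by (apply Rmult_le_pos; [apply pow2_ge_0 | nra]).
    assert (0 <= y ^ 3) by (apply pow_le; lra). split; nra. }
  assert (Hk2 : 0 <= k ^ 2) by apply pow2_ge_0.
  split; apply Rmult_le_compat; nra.
Qed.

Lemma V_inv_r_continuous (L y : R) : continuous (V_inv_r L) y.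
Proof. apply (ex_derive_continuous (V_inv_r L)). unfold V_inv_r. auto_derive. exact I. Qed.

(** * Bounds on the Rayleigh quotient *)

Lemma Lam_ge_6 (l : nat) : (2 <= l)%nat -> 6 <= Lam l.
Proof. intros Hl. unfold Lam. assert (H := le_INR _ _ Hl). simpl in H. nra. Qed.

Lemma INR_le_Lam (l : nat) : INR l <= Lam l.
Proof. unfold Lam. assert (H := pos_INR l). nra. Qed.

Lemma admissible_continuous (f : R -> R) :
  admissible M k f -> (forall x, continuous f x) /\ (forall x, continuous (Derive f) x).
Proof.
  intros [Hsmooth _]. split; intros x.
  - apply (ex_derive_continuous f), (Hsmooth 1%nat x).
  - apply (ex_derive_continuous (Derive f)), (Hsmooth 2%nat x).
Qed.

Lemma numer_RInt_inv_r (l : nat) (f : R -> R) :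
  (forall x, continuous f x) -> (forall x, continuous (Derive f) x) ->
  ex_RInt (fun x => Derive f x ^ 2 + V_inv_r (Lam l) (inv_r x) * f x ^ 2)
    (rstar3M M k) (PI / 2) /\
  RInt (fun x => Derive f x ^ 2 + V M k l x * f x ^ 2) (rstar3M M k) (PI / 2) =
  RInt (fun x => Derive f x ^ 2 + V_inv_r (Lam l) (inv_r x) * f x ^ 2) (rstar3M M k) (PI / 2).
Proof.
  intros Hf Hdf. assert (Ha := rstar3M_lt_PI2). split.
  - apply (@ex_RInt_continuous R_CompleteNormedModule). intros x _.
    apply (continuous_plus (fun x => Derive f x ^ 2)); [apply continuous_sqr, Hdf|].
    apply (continuous_mult (fun x => V_inv_r (Lam l) (inv_r x))); [|apply continuous_sqr, Hf].
    apply (continuous_comp inv_r); [apply inv_r_continuous | apply V_inv_r_continuous].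
  - apply RInt_ext. intros x Hx. rewrite Rmin_left, Rmax_right in Hx by lra.
    rewrite V_eq by exact Hx. reflexivity.
Qed.

Lemma denom_pos (l : nat) (f : R -> R) :
  (2 <= l)%nat -> admissible M k f -> 0 < denom M k l f.
Proof.
  intros Hl Hf. assert (HL := Lam_ge_6 l Hl). assert (Ha := rstar3M_lt_PI2).
  destruct (admissible_continuous f Hf) as [Hfc _].
  destruct Hf as [_ [_ [x0 [Hx0 Hfx0]]]].
  unfold denom.
  set (S := RInt (fun x => f x ^ 2) (rstar3M M k) (PI / 2)).
  assert (HS : 0 <= S).
  { apply RInt_ge_0; [lra | | intros; apply pow2_ge_0].
    apply (@ex_RInt_continuous R_CompleteNormedModule). intros; apply continuous_sqr, Hfc. }
  assert (Hc : 0 < 12 * M / (Lam l * (Lam l - 2))) by (apply Rdiv_lt_0_compat; nra).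
  destruct (Req_dec x0 (PI / 2)) as [-> | Hne].
  - assert (0 < f (PI / 2) ^ 2) by (apply pow2_gt_0, Hfx0). nra.
  - assert (0 < S) by (apply (RInt_sqr_pos f _ _ x0); [exact Hfc | lra | exact Hfx0]).
    assert (0 <= f (PI / 2) ^ 2) by apply pow2_ge_0. nra.
Qed.

Lemma Rayleigh_lower (l : nat) (f : R -> R) :
  (2 <= l)%nat -> admissible M k f -> k ^ 2 / 2 * Lam l <= numer M k l f / denom M k l f.
Proof.
  intros Hl Hf. assert (HL := Lam_ge_6 l Hl). assert (Ha := rstar3M_lt_PI2).
  assert (Hden := denom_pos l f Hl Hf).
  destruct (admissible_continuous f Hf) as [Hfc Hdfc].
  destruct (numer_RInt_inv_r l f Hfc Hdfc) as [Hex Heq].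
  apply (Rle_div_r _ _ _ Hden). unfold numer, denom. rewrite Heq.
  set (L := Lam l) in *.
  assert (Hexf : ex_RInt (fun x => f x ^ 2) (rstar3M M k) (PI / 2))
    by (apply (@ex_RInt_continuous R_CompleteNormedModule); intros; apply continuous_sqr, Hfc).
  set (S := RInt (fun x => f x ^ 2) (rstar3M M k) (PI / 2)).
  set (T := f (PI / 2) ^ 2).
  assert (HS : 0 <= S) by (apply RInt_ge_0; [lra | exact Hexf | intros; apply pow2_ge_0]).
  assert (HT : 0 <= T) by apply pow2_ge_0.
  assert (Hk2 : 0 <= k ^ 2) by apply pow2_ge_0.
  assert (Hint : k ^ 2 * (L - 2) * S <=
    RInt (fun x => Derive f x ^ 2 + V_inv_r L (inv_r x) * f x ^ 2) (rstar3M M k) (PI / 2)).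
  { replace (k ^ 2 * (L - 2) * S)
      with (RInt (fun x => k ^ 2 * (L - 2) * f x ^ 2) (rstar3M M k) (PI / 2))
      by (apply (RInt_scal (fun x => f x ^ 2)), Hexf).
    apply RInt_le; [lra | apply (ex_RInt_scal (fun x => f x ^ 2)), Hexf | exact Hex |].
    intros x _. destruct (V_inv_r_bounds L (inv_r x) ltac:(lra) (inv_r_bounds x)) as [Hlow _].
    assert (0 <= Derive f x ^ 2) by apply pow2_ge_0.
    apply Rle_trans with (V_inv_r L (inv_r x) * f x ^ 2); [|lra].
    apply Rmult_le_compat_r; [apply pow2_ge_0 | exact Hlow]. }
  assert (Hbd : k ^ 2 / 2 * L * (12 * M / (L * (L - 2)) * T) = 6 * M * k ^ 2 / (L - 2) * T)
    by (field; lra).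
  assert (HkL : k ^ 2 / 2 * L * S <= k ^ 2 * (L - 2) * S).
  { apply Rmult_le_compat_r; [exact HS|].
    assert (0 <= k ^ 2 * (L / 2 - 2)) by (apply Rmult_le_pos; lra). lra. }
  rewrite Rmult_plus_distr_l, Hbd. lra.
Qed.

Lemma flat_one_admissible (c : R) :
  rstar3M M k < c < PI / 2 -> admissible M k (flat c (fun _ => 1)).
Proof.
  intros Hc. split; [|split].
  - apply flat_smooth, is_poly_const.
  - exists (c - rstar3M M k). split; [lra|]. intros x Hx. apply flat_eq_0. lra.
  - exists (PI / 2). split; [lra|]. apply Rgt_not_eq, flat_one_pos. lra.
Qed.

Lemma numer_le_vanishing (l : nat) (f : R -> R) (R0 : R) :
  (2 <= l)%nat -> 3 * M <= R0 -> admissible M k f ->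
  (forall x, x <= rstar M k R0 -> f x = 0) ->
  numer M k l f <=
  RInt (fun x => Derive f x ^ 2) (rstar3M M k) (PI / 2)
  + (k ^ 2 + (/ R0) ^ 2) * Lam l * RInt (fun x => f x ^ 2) (rstar3M M k) (PI / 2)
  + 6 * M * k ^ 2 / (Lam l - 2) * f (PI / 2) ^ 2.
Proof.
  intros Hl HR0 Hf Hvanish. assert (HL := Lam_ge_6 l Hl). assert (Ha := rstar3M_lt_PI2).
  destruct (admissible_continuous f Hf) as [Hfc Hdfc].
  destruct (numer_RInt_inv_r l f Hfc Hdfc) as [Hex Heq].
  unfold numer. apply Rplus_le_compat_r. rewrite Heq.
  set (L := Lam l) in *. set (C := (k ^ 2 + (/ R0) ^ 2) * L).
  assert (Hexf : ex_RInt (fun x => f x ^ 2) (rstar3M M k) (PI / 2))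
    by (apply (@ex_RInt_continuous R_CompleteNormedModule); intros; apply continuous_sqr, Hfc).
  assert (Hexdf : ex_RInt (fun x => Derive f x ^ 2) (rstar3M M k) (PI / 2))
    by (apply (@ex_RInt_continuous R_CompleteNormedModule); intros; apply continuous_sqr, Hdfc).
  assert (Hexg : ex_RInt (fun x => C * f x ^ 2) (rstar3M M k) (PI / 2))
    by (apply (ex_RInt_scal (fun x => f x ^ 2)), Hexf).
  rewrite <- (RInt_scal (fun x => f x ^ 2)) by exact Hexf.
  rewrite <- (RInt_plus (fun x => Derive f x ^ 2) (fun x => C * f x ^ 2)) by assumption.
  apply RInt_le; [lra | exact Hex | apply (ex_RInt_plus (fun x => Derive f x ^ 2)); assumption |].
  intros x Hx. apply Rplus_le_compat_l.
  destruct (Rle_or_lt x (rstar M k R0)) as [Hle | Hgt].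
  - rewrite Hvanish by exact Hle. lra.
  - apply Rmult_le_compat_r; [apply pow2_ge_0|].
    assert (Hr := r_of_gt R0 x HR0 ltac:(lra)).
    assert (Hy := inv_r_bounds x).
    assert (Hy' : inv_r x <= / R0)
      by (rewrite inv_r_mid by lra; apply Rlt_le, Rinv_lt_contravar; nra).
    destruct (V_inv_r_bounds L (inv_r x) ltac:(lra) Hy) as [_ Hup].
    apply Rle_trans with ((k ^ 2 + inv_r x ^ 2) * L); [exact Hup|].
    unfold C. apply Rmult_le_compat_r; [lra|].
    apply Rplus_le_compat_l, pow_incr. lra.
Qed.

Lemma Rayleigh_le_vanishing (l : nat) (f : R -> R) (R0 eta : R) :
  (2 <= l)%nat -> 3 * M <= R0 -> (/ R0) ^ 2 <= eta / 2 -> admissible M k f ->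
  (forall x, x <= rstar M k R0 -> f x = 0) ->
  RInt (fun x => Derive f x ^ 2) (rstar3M M k) (PI / 2)
    <= eta / 2 * Lam l * RInt (fun x => f x ^ 2) (rstar3M M k) (PI / 2) ->
  numer M k l f / denom M k l f <= (k ^ 2 + eta) * Lam l.
Proof.
  intros Hl HR0 HR0eta Hf Hvanish HA.
  assert (HL := Lam_ge_6 l Hl). assert (Ha := rstar3M_lt_PI2).
  assert (Hnum := numer_le_vanishing l f R0 Hl HR0 Hf Hvanish).
  apply (Rle_div_l _ _ _ (denom_pos l f Hl Hf)). unfold denom.
  set (L := Lam l) in *. set (T := f (PI / 2) ^ 2) in *.
  set (A := RInt (fun x => Derive f x ^ 2) (rstar3M M k) (PI / 2)) in *.
  set (B := RInt (fun x => f x ^ 2) (rstar3M M k) (PI / 2)) in *.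
  assert (HB : 0 <= B).
  { apply RInt_ge_0; [lra | | intros; apply pow2_ge_0].
    destruct (admissible_continuous f Hf) as [Hfc _].
    apply (@ex_RInt_continuous R_CompleteNormedModule); intros; apply continuous_sqr, Hfc. }
  assert (HT : 0 <= T) by apply pow2_ge_0.
  assert (Hk2 : 0 <= k ^ 2) by apply pow2_ge_0.
  assert (Hbulk : (k ^ 2 + (/ R0) ^ 2) * L * B <= (k ^ 2 + eta / 2) * L * B).
  { apply Rmult_le_compat_r; [exact HB|]. apply Rmult_le_compat_r; lra. }
  assert (Hbd : 6 * M * k ^ 2 / (L - 2) * T <= (k ^ 2 + eta) * L * (12 * M / (L * (L - 2)) * T)).
  { replace ((k ^ 2 + eta) * L * (12 * M / (L * (L - 2)) * T))
      with (12 * M * (k ^ 2 + eta) / (L - 2) * T) by (field; lra).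
    apply Rmult_le_compat_r; [exact HT|]. unfold Rdiv.
    apply Rmult_le_compat_r; [apply Rlt_le, Rinv_0_lt_compat; lra | nra]. }
  rewrite Rmult_plus_distr_l. lra.
Qed.

Lemma Rayleigh_upper (eta : R) : 0 < eta ->
  exists L0 : nat, forall l : nat, (2 <= l)%nat -> (L0 <= l)%nat ->
  exists f, admissible M k f /\ numer M k l f / denom M k l f <= (k ^ 2 + eta) * Lam l.
Proof.
  intros Heta. assert (Ha := rstar3M_lt_PI2).
  set (R0 := 3 * M + 1 + 2 / eta).
  assert (Heta2 : 0 < 2 / eta) by (apply Rdiv_lt_0_compat; lra).
  assert (HR0 : (/ R0) ^ 2 <= eta / 2).
  { assert (Hinv : / R0 <= / (2 / eta)) by (apply Rinv_le_contravar; unfold R0; lra).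
    assert (Hinv1 : / R0 <= 1)
      by (rewrite <- Rinv_1; apply Rinv_le_contravar; unfold R0; lra).
    assert (0 < / R0) by (apply Rinv_0_lt_compat; unfold R0; lra).
    replace (eta / 2) with (/ (2 / eta)) by (field; lra). simpl. nra. }
  set (c := rstar M k R0).
  assert (Hc : rstar3M M k < c < PI / 2)
    by (split; [apply rstar_lt | apply rstar_lt_PI2]; unfold R0; lra).
  set (f := flat c (fun _ => 1)).
  assert (Hf : admissible M k f) by apply (flat_one_admissible c Hc).
  destruct (admissible_continuous f Hf) as [Hfc Hdfc].
  set (A := RInt (fun x => Derive f x ^ 2) (rstar3M M k) (PI / 2)).
  set (B := RInt (fun x => f x ^ 2) (rstar3M M k) (PI / 2)).
  assert (HA : 0 <= A).
  { apply RInt_ge_0; [lra | | intros; apply pow2_ge_0].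
    apply (@ex_RInt_continuous R_CompleteNormedModule); intros; apply continuous_sqr, Hdfc. }
  assert (HB : 0 < B).
  { apply (RInt_sqr_pos f _ _ ((c + PI / 2) / 2)); [exact Hfc | lra |].
    apply Rgt_not_eq, flat_one_pos. lra. }
  destruct (nfloor_ex (2 * A / (eta * B))) as [n Hn].
  { apply Rmult_le_pos; [lra | apply Rlt_le, Rinv_0_lt_compat, Rmult_lt_0_compat; assumption]. }
  exists (S n). intros l Hl HlL0. exists f. split; [exact Hf|].
  apply (Rayleigh_le_vanishing l f R0 eta Hl); [unfold R0; lra | exact HR0 | exact Hf | |].
  - intros x Hx. apply flat_eq_0, Hx.
  - assert (HnL : 2 * A / (eta * B) < Lam l).
    { apply le_INR in HlL0. rewrite S_INR in HlL0. assert (H := INR_le_Lam l). lra. }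
    apply (Rmult_lt_compat_r (eta * B)) in HnL; [|nra].
    replace (2 * A / (eta * B) * (eta * B)) with (2 * A) in HnL by (field; lra).
    fold A B. lra.
Qed.

Lemma omega2_ge (l : nat) (q : R) :
  (forall f, admissible M k f -> q <= numer M k l f / denom M k l f) ->
  Rbar_le q (omega2 M k l).
Proof.
  intros Hq. apply (proj2 (Glb_Rbar_correct _)). intros x [f [Hf ->]]. apply Hq, Hf.
Qed.

Lemma omega2_le (l : nat) (f : R -> R) :
  admissible M k f -> Rbar_le (omega2 M k l) (numer M k l f / denom M k l f).
Proof.
  intros Hf. apply (proj1 (Glb_Rbar_correct _)). exists f. split; [exact Hf | reflexivity].
Qed.

End SchwarzschildAdS.

Theorem lemma4p11 (M k eta : R) (HM : 0 < M) (Hk : 0 < k) (Heta : 0 < eta) :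
  exists L0 : nat, forall l : nat, (2 <= l)%nat -> (L0 <= l)%nat ->
    Rbar_le (Finite (k ^ 2 / 2 * Lam l)) (omega2 M k l) /\
    Rbar_le (omega2 M k l) (Finite ((k ^ 2 + eta) * Lam l)).
Proof.
  destruct (Rayleigh_upper M k HM Hk eta Heta) as [L0 HL0].
  exists L0. intros l Hl HlL0. split.
  - apply omega2_ge. intros f Hf. exact (Rayleigh_lower M k HM Hk l f Hl Hf).
  - destruct (HL0 l Hl HlL0) as [f [Hf Hq]].
    apply Rbar_le_trans with (Finite (numer M k l f / denom M k l f)); [|exact Hq].
    apply omega2_le, Hf.
Qed.
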